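(* Let $D>0$ be a square-free integer with $-D\equiv 2$ or $3\pmod 4$, and suppose $C(-4D)\cong(\mathbb{Z}/2\mathbb{Z})^n$ for some $n\ge 0$. Let $c=p_1^{n_1}\cdots p_k^{n_k}$ be an odd positive integer, with $p_i$ distinct primes. Then there exists a normalized solution $(a,b,c)$ to $x^2+Dy^2=z^2$ if and only if $\left(\frac{-D}{p_i}\right)=1$ for all $1\le i\le k$.
   Context: A normalized solution of $x^2+Dy^2=z^2$ is a triple $(a,b,c)$ of natural numbers with $a^2+Db^2=c^2$ and $\gcd(a,b,c)=1$. $C(-4D)$ denotes the set of $\mathrm{SL}_2(\mathbb{Z})$-equivalence classes of primitive positive-definite binary quadratic forms of discriminant $-4D$, a group under Dirichlet composition. $\left(\frac{\cdot}{p}\right)$ is the Legendre symbol. *)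

From mathcomp Require Import all_boot all_order all_algebra.
Set Implicit Arguments. Unset Strict Implicit. Unset Printing Implicit Defensive.
Import Order.TTheory GRing.Theory Num.Theory.
Local Open Scope ring_scope.

(* A binary quadratic form a x^2 + b x y + c y^2, coded as (a, b, c). *)
Definition bqf := (int * int * int)%type.
Definition fa (f : bqf) : int := f.1.1.
Definition fb (f : bqf) : int := f.1.2.
Definition fc (f : bqf) : int := f.2.

Definition disc (f : bqf) : int := fb f ^+ 2 - 4 * fa f * fc f.

Definition primitive_form (f : bqf) : bool :=
  gcdz (gcdz (fa f) (fb f)) (fc f) == 1.

Definition posdef (f : bqf) : bool := (0 < fa f) && (disc f < 0).

(* the forms whose classes make up C(Delta) *)
Definition form_of_disc (Delta : int) (f : bqf) : bool :=
  [&& primitive_form f, posdef f & disc f == Delta].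

(* proper (SL_2(Z)) equivalence: g(x,y) = f(p x + q y, r x + s y), ps - qr = 1 *)
Definition sl2_equiv (f g : bqf) : Prop :=
  exists p q r s : int, p * s - q * r = 1 /\
    fa g = fa f * p ^+ 2 + fb f * p * r + fc f * r ^+ 2 /\
    fb g = 2 * fa f * p * q + fb f * (p * s + q * r) + 2 * fc f * r * s /\
    fc g = fa f * q ^+ 2 + fb f * q * s + fc f * s ^+ 2.

(* Dirichlet composition, as a relation on forms: h represents the
   composite class [f][g] when f ~ (a, B, a'C), g ~ (a', B, aC) and
   h ~ (aa', B, C) with a, a' > 0 (gcd(a,a',B) = 1 is automatic from the
   primitivity of f and g). *)
Definition dirichlet_comp (f g h : bqf) : Prop :=
  exists a a' B C : int, 0 < a /\ 0 < a' /\
    sl2_equiv f (a, B, a' * C) /\ sl2_equiv g (a', B, a * C) /\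
    sl2_equiv h (a * a', B, C).

(* C(Delta) is isomorphic to (Z/2Z)^n: a map phi from forms to F_2^n
   (vectors of booleans, addition = xor) inducing a bijection on
   SL_2(Z)-classes which is a homomorphism for Dirichlet composition. *)
Definition class_group_iso_Z2n (Delta : int) (n : nat) : Prop :=
  exists phi : bqf -> {ffun 'I_n -> bool},
    (forall f g, form_of_disc Delta f -> form_of_disc Delta g ->
       (sl2_equiv f g <-> phi f = phi g)) /\
    (forall v, exists f, form_of_disc Delta f /\ phi f = v) /\
    (forall f g h, form_of_disc Delta f -> form_of_disc Delta g ->
       form_of_disc Delta h -> dirichlet_comp f g h ->
       phi h = [ffun i => xorb (phi f i) (phi g i)]).

Definition squarefree (D : nat) : Prop :=
  forall p : nat, prime p -> ~~ (p * p %| D)%N.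

Definition legendre_eq1 (a : int) (p : nat) : Prop :=
  ~~ (p%:Z %| a)%Z /\ exists x : int, (p%:Z %| x ^+ 2 - a)%Z.

Definition normalized_solution (D a b c : nat) : Prop :=
  (a ^ 2 + D * b ^ 2 = c ^ 2)%N /\ gcdn (gcdn a b) c = 1%N.

From mathcomp Require Import all_boot all_order all_algebra.
From mathcomp Require Import ring.
Set Implicit Arguments. Unset Strict Implicit. Unset Printing Implicit Defensive.
Import Order.TTheory GRing.Theory Num.Theory.
Local Open Scope ring_scope.

(* If (a, b, c) is a normalized solution and p | c, then p divides neither b
   nor, D being squarefree, D; hence -D = (a/b)^2 mod p.  Conversely, square
   roots of -D modulo the odd primes dividing c lift (Hensel) and glue (CRT)
   to some t with t^2 = -D mod c^2, say t^2 + D = C c^2.  The form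
   (c, 2t, cC) is primitive of discriminant -4D and its Dirichlet square is
   (c^2, 2t, C); as C(-4D) has exponent 2, the latter is properly equivalent
   to x^2 + D y^2, which thus properly represents c^2. *)

Lemma coprime_no_common_prime (m n : nat) : (0 < m)%N ->
  (forall p, prime p -> (p %| m)%N -> ~~ (p %| n)%N) -> coprime m n.
Proof.
move=> m_gt0 no_common; rewrite /coprime.
have [//|g_neq1] := eqVneq (gcdn m n) 1%N.
have g_gt1 : (1 < gcdn m n)%N by rewrite ltn_neqAle eq_sym g_neq1 gcdn_gt0 m_gt0.
have p_g := pdiv_dvd (gcdn m n).
have := no_common _ (pdiv_prime g_gt1) (dvdn_trans p_g (dvdn_gcdl m n)).
by rewrite (dvdn_trans p_g (dvdn_gcdr m n)).
Qed.

Section SquareRootsModulo.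

Variable D : int.

Lemma coprimez_prime_root (p : nat) (t : int) : prime p ->
  ~~ (p%:Z %| D)%Z -> (p%:Z %| t ^+ 2 + D)%Z -> coprimez p%:Z t.
Proof.
move=> p_pr p_ndvd_D p_root; rewrite coprimezE /= prime_coprime //.
apply: contra p_ndvd_D => p_t.
have p_t2 : (p%:Z %| t ^+ 2)%Z by apply: dvdz_exp; rewrite ?dvdzE.
by rewrite -(rpredDl _ p_t2).
Qed.

Lemma root_congr (M t u : int) :
  (M %| u - t)%Z -> (M %| t ^+ 2 + D)%Z -> (M %| u ^+ 2 + D)%Z.
Proof.
move=> M_ut M_t; have -> : u ^+ 2 + D = (t ^+ 2 + D) + (u - t) * (u + t) by ring.
by rewrite rpredD // dvdz_mulr.
Qed.

Lemma root_mul_coprime (M N t s : int) : coprimez M N ->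
  (M %| t ^+ 2 + D)%Z -> (N %| s ^+ 2 + D)%Z ->
  exists u, (M * N %| u ^+ 2 + D)%Z.
Proof.
move=> coMN M_t N_s; have /coprimezP [[x y] /= bezout] := coMN.
exists (t * y * N + s * x * M); rewrite Gauss_dvdz //; apply/andP; split.
- apply: root_congr M_t; apply/dvdzP; exists (x * (s - t)).
  have -> : t * y * N = t * (1 - x * M) by rewrite -bezout; ring.
  by ring.
- apply: root_congr N_s; apply/dvdzP; exists (y * (t - s)).
  have -> : s * x * M = s * (1 - y * N) by rewrite -bezout; ring.
  by ring.
Qed.

(* Hensel's lemma: the derivative [2 t] of [X^2 + D] is invertible mod [p]. *)
Lemma root_lift_prime (p : nat) (M t : int) : prime p -> odd p ->
  ~~ (p%:Z %| D)%Z -> (p%:Z %| M)%Z -> (M %| t ^+ 2 + D)%Z ->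
  exists u, (M * p%:Z %| u ^+ 2 + D)%Z.
Proof.
move=> p_pr p_odd p_ndvd_D p_M M_t.
have /coprimezP [[y x] /= bezout] : coprimez p%:Z (2 * t).
  rewrite coprimezMr (coprimez_prime_root p_pr p_ndvd_D (dvdz_trans p_M M_t)).
  by rewrite coprimezE /= coprimen2 p_odd.
move: p_M M_t => /dvdzP [m ->] /dvdzP [v M_t].
exists (t - v * x * m * p%:Z); apply/dvdzP; exists (v * y + (v * x) ^+ 2 * m).
have -> : (t - v * x * m * p%:Z) ^+ 2 + D
    = (t ^+ 2 + D) - v * (m * p%:Z) * (x * (2 * t)) + (v * x * m * p%:Z) ^+ 2.
  by ring.
have -> : x * (2 * t) = 1 - y * p%:Z by apply: (addrI (y * p%:Z)); rewrite bezout; ring.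
by rewrite M_t; ring.
Qed.

Lemma root_exists (m : nat) : (0 < m)%N ->
  (forall p, prime p -> (p %| m)%N ->
     [/\ odd p, ~~ (p%:Z %| D)%Z & exists x, (p%:Z %| x ^+ 2 + D)%Z]) ->
  exists t, (m%:Z %| t ^+ 2 + D)%Z.
Proof.
elim/ltn_ind: m => m IHm m_gt0 local_roots.
have [->|m_neq1] := eqVneq m 1%N; first by exists 0; rewrite dvd1z.
have m_gt1 : (1 < m)%N by rewrite ltn_neqAle eq_sym m_neq1 m_gt0.
set p := pdiv m; have p_pr : prime p := pdiv_prime m_gt1.
have p_m : (p %| m)%N := pdiv_dvd m.
have m'_m : (m %/ p %| m)%N by apply: dvdn_div.
have [t m'_t] : exists t, ((m %/ p)%:Z %| t ^+ 2 + D)%Z.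
  apply: (IHm (m %/ p)%N).
  - exact: ltn_Pdiv (prime_gt1 p_pr) m_gt0.
  - by rewrite divn_gt0 ?prime_gt0 //; apply: dvdn_leq.
  - by move=> q q_pr q_m'; apply: local_roots (dvdn_trans q_m' m'_m).
have [p_odd p_ndvd_D [x p_x]] := local_roots p p_pr p_m.
rewrite -(divnK p_m) PoszM.
have [p_m'|p_ndvd_m'] := boolP (p %| m %/ p)%N.
  by apply: root_lift_prime p_pr p_odd p_ndvd_D _ m'_t; rewrite dvdzE.
apply: root_mul_coprime m'_t p_x.
by rewrite coprimezE /= coprime_sym prime_coprime.
Qed.

Lemma coprimez_root (m : nat) (t : int) : (0 < m)%N ->
  (forall p, prime p -> (p %| m)%N -> ~~ (p%:Z %| D)%Z) ->
  (m%:Z %| t ^+ 2 + D)%Z -> coprimez m%:Z t.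
Proof.
move=> m_gt0 m_D m_t; rewrite coprimezE.
apply: coprime_no_common_prime => // p p_pr p_m.
rewrite -prime_coprime // -[p]/(`|p%:Z|)%N -coprimezE.
apply: coprimez_prime_root p_pr (m_D p p_pr p_m) (dvdz_trans _ m_t).
by rewrite dvdzE.
Qed.

End SquareRootsModulo.

Lemma legendre_eq1_oppz (d : int) (p : nat) :
  legendre_eq1 (- d) p <-> ~~ (p%:Z %| d)%Z /\ exists x, (p%:Z %| x ^+ 2 + d)%Z.
Proof. by rewrite /legendre_eq1 rpredN opprK. Qed.

Lemma root_of_dvdz_sqr_add (p : nat) (a b d : int) : prime p ->
  ~~ (p%:Z %| b)%Z -> (p%:Z %| a ^+ 2 + d * b ^+ 2)%Z ->
  exists x, (p%:Z %| x ^+ 2 + d)%Z.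
Proof.
move=> p_pr p_ndvd_b /dvdzP [w sum_eq].
have /coprimezP [[u v] /= bezout] : coprimez b p%:Z.
  by rewrite coprimezE /= coprime_sym prime_coprime // -dvdzE.
exists (a * u); apply/dvdzP; exists (u ^+ 2 * w + d * v * (1 + u * b)).
have -> : (a * u) ^+ 2 + d = u ^+ 2 * (a ^+ 2 + d * b ^+ 2) + d * (1 - u * b) * (1 + u * b).
  by ring.
have -> : 1 - u * b = v * p%:Z by apply: (addrI (u * b)); rewrite bezout; ring.
by rewrite sum_eq; ring.
Qed.

Section NormalizedSolutionModPrime.

Variables (D a b c p : nat).
Hypotheses (sol : normalized_solution D a b c) (p_pr : prime p) (p_c : (p %| c)%N).

Lemma normalized_solution_dvd_a : (p %| D * b ^ 2)%N -> (p %| a)%N.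
Proof.
move=> p_Db2; have [sum_eq _] := sol.
have p_c2 : (p %| c ^ 2)%N by rewrite dvdn_exp.
have : (p %| a ^ 2)%N by rewrite -(dvdn_addl _ p_Db2) sum_eq.
by rewrite Euclid_dvdX // andbT.
Qed.

Lemma normalized_solution_ndvd_b : ~~ (p %| b)%N.
Proof.
apply/negP => p_b; have [_ gcd_eq1] := sol.
have p_a : (p %| a)%N by apply: normalized_solution_dvd_a; rewrite dvdn_mull ?dvdn_exp.
have : (p %| gcdn (gcdn a b) c)%N by rewrite !dvdn_gcd p_a p_b p_c.
by rewrite gcd_eq1 dvdn1 => /eqP p1; move: p_pr; rewrite p1.
Qed.

(* [p] cannot divide [D] since [p^2] would then divide [D b^2] but not [b^2]. *)
Lemma normalized_solution_ndvd_D : squarefree D -> ~~ (p %| D)%N.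
Proof.
move=> sqfree_D; apply/negP => p_D; have [sum_eq _] := sol.
have p_a := normalized_solution_dvd_a (dvdn_mulr _ p_D).
have p2_Db2 : (p ^ 2 %| D * b ^ 2)%N.
  by rewrite -(dvdn_addr _ (dvdn_exp2r 2 p_a)) sum_eq dvdn_exp2r.
have co_p2_b2 : coprime (p ^ 2) (b ^ 2).
  by rewrite coprimeXl // coprimeXr // prime_coprime // normalized_solution_ndvd_b.
by move: (sqfree_D p p_pr); rewrite mulnn -(Gauss_dvdl _ co_p2_b2) p2_Db2.
Qed.

Lemma normalized_solution_legendre : squarefree D -> legendre_eq1 (- D%:Z) p.
Proof.
move=> sqfree_D; apply/legendre_eq1_oppz; split.
  by rewrite dvdzE normalized_solution_ndvd_D.
have [sum_eq _] := sol.
apply: (@root_of_dvdz_sqr_add _ a%:Z b%:Z) p_pr _ _.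
  by rewrite dvdzE normalized_solution_ndvd_b.
have -> : a%:Z ^+ 2 + D%:Z * b%:Z ^+ 2 = (c ^ 2)%N%:Z.
  by rewrite -sum_eq -!natz natrD natrM !natrX.
by rewrite dvdzE dvdn_exp.
Qed.

End NormalizedSolutionModPrime.

Lemma sl2_equiv_refl (f : bqf) : sl2_equiv f f.
Proof. by exists 1, 0, 0, 1; rewrite /fa /fb /fc; do !split; ring. Qed.

Lemma dirichlet_comp_sqr (a B C : int) : 0 < a ->
  dirichlet_comp (a, B, a * C) (a, B, a * C) (a * a, B, C).
Proof. by move=> a_gt0; exists a, a, B, C; do !split => //; apply: sl2_equiv_refl. Qed.

Lemma form_of_disc_coprime (Delta a B C : int) : 0 < a -> coprimez a B ->
  B ^+ 2 - 4 * a * C = Delta -> Delta < 0 -> form_of_disc Delta (a, B, C).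
Proof.
move=> a_gt0 co_aB disc_eq Delta_lt0.
rewrite /form_of_disc /primitive_form /posdef /disc /fa /fb /fc /=.
by rewrite disc_eq Delta_lt0 a_gt0 eqxx (eqP co_aB) /gcdz /= gcd1n.
Qed.

(* In an elementary abelian 2-group every square is trivial. *)
Lemma class_group_Z2n_sqr_equiv (Delta : int) (n : nat) (f g h k : bqf) :
  class_group_iso_Z2n Delta n ->
  form_of_disc Delta f -> form_of_disc Delta g ->
  form_of_disc Delta h -> form_of_disc Delta k ->
  dirichlet_comp f f h -> dirichlet_comp g g k -> sl2_equiv h k.
Proof.
move=> [phi [phi_classes [_ phi_comp]]] Df Dg Dh Dk ffh ggk.
apply/(phi_classes _ _ Dh Dk).
rewrite (phi_comp _ _ _ Df Df Dh ffh) (phi_comp _ _ _ Dg Dg Dk ggk).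
by apply/ffunP => i; rewrite !ffunE; case: (phi f i); case: (phi g i).
Qed.

Lemma sl2_equiv_principal (d : int) (h : bqf) : sl2_equiv (1, 0, d) h ->
  exists x y, coprimez x y /\ fa h = x ^+ 2 + d * y ^+ 2.
Proof.
move=> [x [q [y [s [det [fa_h _]]]]]]; exists x, y; split.
  by apply/coprimezP; exists (s, - q); rewrite /= -det; ring.
by rewrite fa_h /fa /fb /fc /=; ring.
Qed.

Lemma normalized_solution_absz (D c : nat) (x y : int) : coprimez x y ->
  x ^+ 2 + D%:Z * y ^+ 2 = (c ^ 2)%N%:Z -> normalized_solution D `|x| `|y| c.
Proof.
move=> co_xy sum_eq; split.
  apply/eqP; rewrite -eqz_nat -sum_eq PoszD PoszM -!abszX !abszE.
  by rewrite !ger0_norm ?sqr_ge0.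
by move: co_xy; rewrite coprimezE => /eqP ->; rewrite gcd1n.
Qed.

Lemma legendre_root_mod_sqr (D c : nat) : odd c -> (0 < c)%N ->
  (forall p, prime p -> (p %| c)%N -> legendre_eq1 (- D%:Z) p) ->
  exists t C : int, coprimez c%:Z (2 * t) /\ D%:Z = C * (c%:Z * c%:Z) - t ^+ 2.
Proof.
move=> c_odd c_gt0 c_legendre.
have c_local p : prime p -> (p %| c)%N ->
    [/\ odd p, ~~ (p%:Z %| D%:Z)%Z & exists x, (p%:Z %| x ^+ 2 + D%:Z)%Z].
  move=> p_pr p_c; have /legendre_eq1_oppz [p_ndvd_D p_root] := c_legendre p p_pr p_c.
  split=> //; apply: contraLR c_odd; rewrite -!dvdn2 => /dvdn_trans; exact.
have [t c2_t] : exists t, ((c * c)%N%:Z %| t ^+ 2 + D%:Z)%Z.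
  apply: root_exists; first by rewrite muln_gt0 c_gt0.
  by move=> p p_pr; rewrite Euclid_dvdM // orbb; apply: c_local.
have [C C_eq] := dvdzP c2_t.
exists t, C; split; last by rewrite -PoszM -C_eq; ring.
rewrite coprimezMr {1}coprimezE /= coprimen2 c_odd /=.
apply: coprimez_root c_gt0 _ (dvdz_trans _ c2_t).
  by move=> p p_pr p_c; have [] := c_local p p_pr p_c.
by rewrite PoszM dvdz_mulr.
Qed.

Lemma principal_form_represents_sqr (D n : nat) (c t C : int) : (0 < D)%N ->
  class_group_iso_Z2n (- (4 * D)%:Z) n -> 0 < c -> coprimez c (2 * t) ->
  D%:Z = C * (c * c) - t ^+ 2 ->
  exists x y, coprimez x y /\ c * c = x ^+ 2 + D%:Z * y ^+ 2.
Proof.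
move=> D_gt0 cl2 c_gt0 co_c_2t D_eq.
have D_lt0 : - (4 * D)%:Z < 0 by rewrite oppr_lt0 ltz_nat muln_gt0 D_gt0.
have disc_f : form_of_disc (- (4 * D)%:Z) (c, 2 * t, c * C).
  by apply: form_of_disc_coprime => //; rewrite PoszM D_eq; ring.
have disc_h : form_of_disc (- (4 * D)%:Z) (c * c, 2 * t, C).
  apply: form_of_disc_coprime => //; first by rewrite mulr_gt0.
    by rewrite coprimezMl co_c_2t.
  by rewrite PoszM D_eq; ring.
have disc_1 : form_of_disc (- (4 * D)%:Z) (1, 0, D%:Z).
  by apply: form_of_disc_coprime => //; rewrite PoszM; ring.
have one_sqr : dirichlet_comp (1, 0, D%:Z) (1, 0, D%:Z) (1, 0, D%:Z).
  by have := dirichlet_comp_sqr 0 D%:Z ltr01; rewrite !mul1r.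
apply: (@sl2_equiv_principal D%:Z (c * c, 2 * t, C)).
exact: (class_group_Z2n_sqr_equiv cl2 disc_1 disc_f disc_1 disc_h one_sqr
  (dirichlet_comp_sqr (2 * t) C c_gt0)).
Qed.

Theorem lemma3p3 (D : nat) (c : nat) :
  (0 < D)%N -> squarefree D ->
  (D %% 4 = 1 \/ D %% 4 = 2)%N ->
  (exists n : nat, class_group_iso_Z2n (- (4 * D)%:Z)%R n) ->
  odd c -> (0 < c)%N ->
  (exists a b : nat, normalized_solution D a b c) <->
  (forall p : nat, prime p -> (p %| c)%N -> legendre_eq1 (- D%:Z)%R p).
Proof.
move=> D_gt0 sqfree_D _ [n cl2] c_odd c_gt0; split.
  move=> [a [b sol]] p p_pr p_c.
  exact: normalized_solution_legendre sol p_pr p_c sqfree_D.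
move=> /(legendre_root_mod_sqr c_odd c_gt0) [t [C [co_c_2t D_eq]]].
have c_gt0z : 0 < c%:Z by rewrite ltz_nat.
have [x [y [co_xy c2_eq]]] := principal_form_represents_sqr D_gt0 cl2 c_gt0z co_c_2t D_eq.
exists `|x|%N, `|y|%N; apply: normalized_solution_absz co_xy _.
by rewrite -c2_eq -mulnn PoszM.
Qed.
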